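(* For a dataset $V$ of size $n$, any real $p\in(0,+\infty)$ and any dimension $d\ge1$, the VC dimension of contrastive learning (on triplet queries) for the $\ell_p$-distance class in dimension $d$ is $\Omega(\min(n^2,nd))$.
   Context: $V$ is a finite set with $|V|=n$. A query is a triple $(x,y,z)$ of elements of $V$; a labeling assigns it either $(x,y^+,z^-)$ (requiring $\rho(x,y)<\rho(x,z)$) or $(x,z^+,y^-)$ (requiring $\rho(x,y)>\rho(x,z)$). The $\ell_p$-distance class in dimension $d$ consists of all $\rho(x,y)=\|f(x)-f(y)\|_p$, $f:V\to\mathbb R^d$, where $\|v\|_p=(\sum_i|v_i|^p)^{1/p}$. A set $S$ of queries is shattered if for every labeling of $S$ there is a distance in the class satisfying all labeled queries; the VC dimension is the maximum size of a shattered set. *)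

From HB Require Import structures.
From mathcomp Require Import all_boot all_order all_algebra.
From mathcomp Require Import all_classical all_reals all_analysis.
From mathcomp Require Import Rstruct Rstruct_topology.
From Stdlib Require Rdefinitions.
Notation R := Rdefinitions.R.
Set Implicit Arguments. Unset Strict Implicit. Unset Printing Implicit Defensive.
Import Order.TTheory GRing.Theory Num.Theory.
Local Open Scope ring_scope.

Definition lp_dist (n d : nat) (p : R) (f : 'I_n -> 'rV[R]_d) (x y : 'I_n) : R :=
  (\sum_(i < d) `|f x 0 i - f y 0 i| `^ p) `^ p^-1.

(* A query is a triple (x,y,z).  A labeling assigns to each query a boolean:
   true  means (x, y^+, z^-) : rho(x,y) < rho(x,z);
   false means (x, z^+, y^-) : rho(x,y) > rho(x,z). *)
Definition query (n : nat) := ('I_n * 'I_n * 'I_n)%type.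

Definition satisfies (n : nat) (rho : 'I_n -> 'I_n -> R) (q : query n) (b : bool) : Prop :=
  let: (x, y, z) := q in
  if b then rho x y < rho x z else rho x y > rho x z.

Definition lp_shattered (n d : nat) (p : R) (S : {set query n}) : Prop :=
  forall lab : query n -> bool,
    exists f : 'I_n -> 'rV[R]_d,
      forall q, q \in S -> satisfies (lp_dist p f) q (lab q).

Definition lp_vcdim (n d : nat) (p : R) : nat :=
  \max_(S : {set query n} | `[< lp_shattered d p S >]) #|S|.

(* Take m = min(d, n/4) anchors x_j, partners z_j (j < m) and about n/2
   probes y.  Embed x_j as 3 e_j + sum_(i < m, i <> j) e_i, z_j as e_j, and y
   as 2 times the sum of those e_i (i < m) for which the labeling wants
   (x_i, y^+, z_i^-).  Then f(x_j) - f(y) and f(x_j) - f(z_j) have the same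
   absolute coordinates except at coordinate j, where they are 1 or 3 against
   2, so every query (x_j, y, z_j) receives its label for every exponent p.
   These m (n/2) shattered queries are Omega(min(n^2, n d)). *)

From HB Require Import structures.
From mathcomp Require Import all_boot all_order all_algebra.
From mathcomp Require Import all_classical all_reals all_analysis.
From mathcomp Require Import Rstruct Rstruct_topology.
From Stdlib Require Rdefinitions.
From mathcomp Require Import zify lra.
Import Order.TTheory GRing.Theory Num.Theory.
Local Open Scope ring_scope.

Lemma ltr_lp_norm (d : nat) (p : R) (a b : 'I_d -> R) (j0 : 'I_d) : 0 < p ->
  (forall i, 0 <= a i) -> (forall i, a i <= b i) -> a j0 < b j0 ->
  (\sum_(i < d) a i `^ p) `^ p^-1 < (\sum_(i < d) b i `^ p) `^ p^-1.
Proof.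
move=> p_gt0 a_ge0 le_ab lt_ab.
have b_ge0 i : 0 <= b i by apply: le_trans (le_ab i).
have sum_ge0 (c : 'I_d -> R) : 0 <= \sum_(i < d) c i `^ p.
  by apply: sumr_ge0 => i _; apply: powR_ge0.
apply: gt0_ltr_powR; rewrite ?invr_gt0 ?nnegrE ?sum_ge0 //.
rewrite (bigD1 j0) //= [ltRHS](bigD1 j0) //=.
apply: ltr_leD; first by apply: gt0_ltr_powR; rewrite ?nnegrE ?a_ge0 ?b_ge0.
apply: ler_sum => i _; apply: ge0_ler_powR; rewrite ?nnegrE ?a_ge0 ?b_ge0 //.
exact: ltW.
Qed.

Lemma satisfies_of_coord {n d : nat} {p : R} {f : 'I_n -> 'rV[R]_d}
    {x y z : 'I_n} (j0 : 'I_d) {b : bool} : 0 < p ->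
  (forall i, i != j0 -> `|f x 0 i - f y 0 i| = `|f x 0 i - f z 0 i|) ->
  (if b then `|f x 0 j0 - f y 0 j0| < `|f x 0 j0 - f z 0 j0|
   else `|f x 0 j0 - f z 0 j0| < `|f x 0 j0 - f y 0 j0|) ->
  satisfies (lp_dist p f) (x, y, z) b.
Proof.
move=> p_gt0 eq_off; rewrite /satisfies /lp_dist.
have ltr_gaps (u w : 'I_n) :
    (forall i, i != j0 -> `|f x 0 i - f u 0 i| = `|f x 0 i - f w 0 i|) ->
    `|f x 0 j0 - f u 0 j0| < `|f x 0 j0 - f w 0 j0| ->
    (\sum_(i < d) `|f x 0 i - f u 0 i| `^ p) `^ p^-1 <
    (\sum_(i < d) `|f x 0 i - f w 0 i| `^ p) `^ p^-1.
  move=> eq_uw lt_uw.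
  apply: (ltr_lp_norm _ _ (fun i => `|f x 0 i - f u 0 i|) _ j0) => // i.
  by have [->|/eq_uw ->] := eqVneq i j0; [exact: ltW|].
by case: b => lt_j0; apply: ltr_gaps => // i /eq_off ->.
Qed.

Lemma lp_shattered_card_le {n d : nat} {p : R} {S : {set query n}} :
  lp_shattered d p S -> (#|S| <= lp_vcdim n d p)%N.
Proof. by move=> shS; apply: (leq_bigmax_cond S); apply: asboolT. Qed.

Section Grid.
Variables n m : nat.

(* Points 0 .. m-1 are the anchors, m .. 2m-1 their partners, the rest probes. *)
Definition grid_query (j v : nat) : query n.+1 := (inord j, inord v, inord (m + j)).

Definition grid_queries (b : nat) : {set query n.+1} :=
  [set grid_query k.1 (m + m + k.2) | k : 'I_m * 'I_b].

Lemma card_grid_queries (b : nat) : (m + m + b <= n.+1)%N ->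
  #|grid_queries b| = (m * b)%N.
Proof.
move=> mb_le_n; rewrite card_imset ?card_prod ?card_ord // => -[j k] [j' k'] /=.
case=> /(congr1 (@nat_of_ord _)) + /(congr1 (@nat_of_ord _)) + _.
move: (ltn_ord j) (ltn_ord j') (ltn_ord k) (ltn_ord k') => lt_j lt_j' lt_k lt_k'.
rewrite !inordK; try lia.
move=> eq_j eq_k; congr (_, _); apply: val_inj => /=; lia.
Qed.

Section Embedding.
Variables (d : nat) (lab : query n.+1 -> bool).

Definition grid_coord (v i : nat) : R :=
  if (v < m)%N then (if i == v then 3 else if (i < m)%N then 1 else 0)
  else if (v < m + m)%N then (if i == (v - m)%N then 1 else 0)
  else if (i < m)%N && lab (grid_query i v) then 2 else 0.

Definition grid_embedding (v : 'I_n.+1) : 'rV[R]_d := \row_(i < d) grid_coord v i.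

Hypothesis grid_fits : (m + m <= n.+1)%N.

Lemma grid_embedding_anchor (j : nat) (i : 'I_d) : (j < m)%N ->
  grid_embedding (inord j) 0 i = if val i == j then 3 else if (i < m)%N then 1 else 0.
Proof. by move=> j_lt_m; rewrite mxE /grid_coord inordK ?j_lt_m //; lia. Qed.

Lemma grid_embedding_partner (j : nat) (i : 'I_d) : (j < m)%N ->
  grid_embedding (inord (m + j)) 0 i = if val i == j then 1 else 0.
Proof.
move=> j_lt_m; rewrite mxE /grid_coord inordK; last by lia.
have [-> ->] : (m + j < m)%N = false /\ (m + j < m + m)%N by lia.
by rewrite addKn.
Qed.

Lemma grid_embedding_probe (v : nat) (i : 'I_d) : (m + m <= v < n.+1)%N ->
  grid_embedding (inord v) 0 i = if (i < m)%N && lab (grid_query i v) then 2 else 0.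
Proof.
move=> v_probe; rewrite mxE /grid_coord inordK; last by lia.
by have [-> ->] : (v < m)%N = false /\ (v < m + m)%N = false by lia.
Qed.

Lemma grid_query_satisfied (p : R) (j v : nat) : 0 < p -> (m <= d)%N ->
  (j < m)%N -> (m + m <= v < n.+1)%N ->
  satisfies (lp_dist p grid_embedding) (grid_query j v) (lab (grid_query j v)).
Proof.
move=> p_gt0 m_le_d j_lt_m v_probe.
have j_lt_d : (j < d)%N by lia.
apply: (satisfies_of_coord (Ordinal j_lt_d)) => // [i ne_ij|].
  have {ne_ij} /negPf ne_ij : val i != j by apply: contra ne_ij => /eqP eq_ij; apply/eqP/val_inj.
  rewrite grid_embedding_anchor ?grid_embedding_partner ?grid_embedding_probe ?ne_ij //.
  by case: (i < m)%N => //=; case: lab; rewrite ?subr0 // normr1 ler0_norm; lra.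
rewrite grid_embedding_anchor ?grid_embedding_partner ?grid_embedding_probe //= eqxx j_lt_m /=.
case: lab; rewrite !ger0_norm; lra.
Qed.

End Embedding.
End Grid.

Lemma grid_queries_shattered (n m d b : nat) (p : R) : 0 < p -> (m <= d)%N ->
  (m + m + b <= n.+1)%N -> lp_shattered d p (grid_queries n m b).
Proof.
move=> p_gt0 m_le_d mb_le_n lab; exists (grid_embedding n m d lab).
move=> _ /imsetP[[j k] _ ->] /=.
by apply: grid_query_satisfied => //; move: (ltn_ord j) (ltn_ord k); lia.
Qed.

Lemma minn_sq_le_grid_size (n d : nat) : (8 <= n)%N ->
  (minn (n ^ 2) (n * d) <= 32 * (minn d (n %/ 4) * (n %/ 2)))%N.
Proof.
move=> n_ge8.
have : (n <= 4 * (n %/ 4) + 3)%N /\ (n <= 2 * (n %/ 2) + 1)%N by lia.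
move: (n %/ 4)%N (n %/ 2)%N => a b [le_n_a le_n_b].
rewrite expnS expn1; case: (leqP d a) => [le_da|lt_ad]; nia.
Qed.

Theorem mainTheorem4 :
  exists c : R, 0 < c /\
  exists N : nat, forall n d : nat, (N <= n)%N -> (1 <= d)%N ->
    forall p : R, 0 < p ->
      c * (minn (n ^ 2) (n * d))%:R <= (lp_vcdim n d p)%:R.
Proof.
exists (1 / 32); split; first lra.
exists 8%N => -[//|n] d n_ge8 _ p p_gt0.
set m := minn d (n.+1 %/ 4)%N; set b := (n.+1 %/ 2)%N.
have shattered : lp_shattered d p (grid_queries n m b).
  by apply: grid_queries_shattered => //; rewrite /m /b; lia.
have := lp_shattered_card_le shattered.
rewrite card_grid_queries; last by rewrite /m /b; lia.
move: (minn_sq_le_grid_size n.+1 d n_ge8); rewrite -/m -/b.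
rewrite -!(ler_nat R) natrM; lra.
Qed.
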